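(* For every $\lambda\in\mathscr{P}^n_C$, $[\xi(\lambda)]=\ell(\lambda)\,\alpha_n^\vee$.
   Context: Setting: $W_{\mathrm{af}}$ affine Weyl group of type $C_n^{(1)}$ generated by $s_0,\dots,s_n$; $W=\langle s_1,\dots,s_n\rangle$ acts on $X^\vee=\bigoplus_{i=1}^n\mathbb{Z}\varepsilon_i$ ($s_i$ swaps $\varepsilon_i,\varepsilon_{i+1}$ for $i<n$; $s_n$ negates $\varepsilon_n$). $Q^\vee=\bigoplus_{i=1}^n\mathbb{Z}\alpha_i^\vee$, $\alpha_i^\vee=\varepsilon_i-\varepsilon_{i+1}$ ($i<n$), $\alpha_n^\vee=\varepsilon_n$. $W_{\mathrm{af}}\cong W\ltimes Q^\vee$ (elements $wt_\xi$, $wt_\xi w^{-1}=t_{w\xi}$), with $s_0=s_\theta t_{-\varepsilon_1}$, $s_\theta=s_1\cdots s_{n-1}s_ns_{n-1}\cdots s_1$. For $\xi=\sum_{i=1}^n c_i\alpha_i^\vee\in Q^\vee$ set $[\xi]=c_n\alpha_n^\vee$. $\rho_i=s_{i-1}\cdots s_1s_0$ ($1\le i\le n$), $\rho_i=s_{2n-i+1}\cdots s_{n-1}s_ns_{n-1}\cdots s_1s_0$ ($n+1\le i\le 2n$). $\mathscr{P}^n_C$: partitions $\lambda=(\lambda_1\ge\dots\ge\lambda_l>0)$ with $\lambda_1\le 2n$ and $\lambda_k<n\Rightarrow\lambda_k>\lambda_{k+1}$; $x_\lambda=\rho_{\lambda_l}\cdots\rho_{\lambda_1}$; $v(\lambda)\in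 W$ and $\xi(\lambda)\in Q^\vee$ are defined by $x_\lambda=v(\lambda)t_{-\xi(\lambda)}$; $\ell(\lambda)=l$ is the number of parts. *)

(* Concrete model of the affine Weyl group of type C_n^(1)
   as the semidirect product W ⋉ Q^∨. *)
From mathcomp Require Import all_boot all_order all_algebra.
Set Implicit Arguments. Unset Strict Implicit. Unset Printing Implicit Defensive.
Import GRing.Theory Num.Theory.
Local Open Scope ring_scope.

(* Vectors of X^∨ = ⊕_{i=1}^n Z ε_i, stored as functions nat -> int
   (only coordinates 1..n are meaningful). *)
Definition vec := nat -> int.

Definition eps (k : nat) : vec := fun j => ((j == k) : nat)%:Z.

Definition act_s (n i : nat) (x : vec) : vec :=
  fun j =>
    if (i < n)%N then
      (if j == i then x i.+1 else if j == i.+1 then x i else x j)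
    else if i == n then (if j == n then - x j else x j)
    else x j.

(* An element of W is represented by a word [:: i1; ...; ik] in s_1..s_n,
   standing for s_{i1} ... s_{ik}; its action on X^∨ : *)
Definition act_word (n : nat) (w : seq nat) (x : vec) : vec :=
  foldr (act_s n) x w.

(* An element w t_ξ of W_af = W ⋉ Q^∨ is the pair (w, ξ). *)
Definition waf := (seq nat * vec)%type.

Definition waf1 : waf := ([::], fun _ => 0).

(* (w t_ξ)(v t_η) = w v t_{v^{-1} ξ + η}, with v^{-1} the reversed word. *)
Definition waf_mul (n : nat) (a b : waf) : waf :=
  (a.1 ++ b.1, fun j => act_word n (rev b.1) a.2 j + b.2 j).

Definition s_theta_word (n : nat) : seq nat := iota 1 n ++ rev (iota 1 n.-1).

(* Affine generators: s_0 = s_θ t_{-ε_1}, s_i = (s_i, 0) for 1 <= i <= n. *)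
Definition gen (n i : nat) : waf :=
  if i == 0%N then (s_theta_word n, fun j => - eps 1 j) else ([:: i], fun _ => 0).

Definition eval_word (n : nat) (u : seq nat) : waf :=
  foldr (fun i acc => waf_mul n (gen n i) acc) waf1 u.

Definition rho_word (n i : nat) : seq nat :=
  if (i <= n)%N then rev (iota 0 i)
  else iota (2 * n - i + 1) (i - n - 1) ++ n :: rev (iota 0 n).
  (* s_{2n-i+1} ... s_{n-1} s_n s_{n-1} ... s_1 s_0 *)

(* P^n_C : partitions (λ_1 >= ... >= λ_l > 0), λ_1 <= 2n,
   and λ_k <= n -> λ_k > λ_{k+1} (parts of size <= n are distinct).
   Partitions are sequences [:: λ_1; ...; λ_l]. *)
Definition in_PC (n : nat) (la : seq nat) : bool :=
  all (fun a => (0 < a <= 2 * n)%N) la &&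
  sorted (fun a b => (b <= a)%N && ((a <= n)%N ==> (b < a)%N)) la.

Definition x_la (n : nat) (la : seq nat) : waf :=
  eval_word n (flatten (map (rho_word n) (rev la))).

(* x_λ = v(λ) t_{-ξ(λ)} *)
Definition v_la (n : nat) (la : seq nat) : seq nat := (x_la n la).1.
Definition xi_la (n : nat) (la : seq nat) : vec := fun j => - (x_la n la).2 j.

Definition coroot (n i : nat) : vec :=
  fun j => if (i < n)%N then eps i j - eps i.+1 j else eps n j.

Definition coroot_comb (n : nat) (c : nat -> int) : vec :=
  fun j => \sum_(1 <= i < n.+1) c i * coroot n i j.

(* Among the simple coroots only alpha_n^vee has a nonzero coordinate sum, so
   [xi] = (sum_j xi_j) alpha_n^vee and it suffices to show that the coordinate
   sum of xi(lambda) is l(lambda).  Writing rho_a = u_a s_0 with u_a in W and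
   s_0 = s_theta t_{-eps_1}, prepending a part a gives
   xi(a :: lambda) = (u_a s_theta)^{-1} xi(lambda) + eps_1.  For a > n the
   Weyl element (u_a s_theta)^{-1} preserves the coordinate sum: its two sign
   changes (one by s_n, one by s_theta) hit the same value.  Parts <= n are
   distinct, and a partition made of them has xi = eps_1 + ... + eps_l. *)
From mathcomp Require Import all_boot all_order all_algebra.
From mathcomp Require Import zify ring.
From Stdlib Require Import FunctionalExtensionality.
Set Implicit Arguments.
Unset Strict Implicit.
Unset Printing Implicit Defensive.
Import GRing.Theory Num.Theory.
Local Open Scope ring_scope.

Definition coord_sum (n : nat) (v : vec) : int := \sum_(1 <= j < n.+1) v j.

Lemma epsE k j : eps k j = if j == k then 1 else 0.
Proof. by rewrite /eps; case: eqP. Qed.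

Lemma sum_nat_indicator n k (F : nat -> int) :
  \sum_(1 <= j < n.+1) (if j == k then F j else 0) = if (1 <= k <= n)%N then F k else 0.
Proof. by rewrite -big_mkcond big_nat1_eq. Qed.

Lemma coord_sumD n (u w : vec) :
  coord_sum n (fun j => u j + w j) = coord_sum n u + coord_sum n w.
Proof. exact: big_split. Qed.

Lemma coord_sum_eps n k : coord_sum n (eps k) = if (1 <= k <= n)%N then 1 else 0.
Proof.
rewrite /coord_sum (eq_bigr _ (fun j _ => epsE k j)).
exact: (sum_nat_indicator _ _ (fun=> 1)).
Qed.

Lemma coord_sum_coroot n i : (1 <= i <= n)%N ->
  coord_sum n (coroot n i) = if i == n then 1 else 0.
Proof.
move=> Hi; rewrite /coord_sum /coroot; case: ltnP => Hin.
- rewrite sumrB -!/(coord_sum n (eps _)) !coord_sum_eps Hi.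
  by rewrite (_ : (1 <= i.+1 <= n)%N) ?subrr ?ifF //; lia.
- by rewrite -/(coord_sum n (eps n)) coord_sum_eps (_ : i == n) ?ifT //; lia.
Qed.

Lemma coord_sum_coroot_comb n c : (1 <= n)%N -> coord_sum n (coroot_comb n c) = c n.
Proof.
move=> Hn; rewrite /coord_sum /coroot_comb exchange_big_nat /=.
under eq_big_nat => i Hi do
  rewrite -mulr_sumr -/(coord_sum n (coroot n i)) coord_sum_coroot // fun_if mulr1 mulr0.
by rewrite sum_nat_indicator ifT //; lia.
Qed.

Lemma coroot_combE n c j : (1 <= j <= n)%N ->
  coroot_comb n c j = c j - (if (1 < j)%N then c j.-1 else 0).
Proof.
move=> Hj; rewrite /coroot_comb (eq_big_nat _ _ (F2 := fun i =>
  (if i == j then c i else 0) - (if i == j.-1 then c i else 0))); last first.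
  move=> i Hi; rewrite /coroot !epsE.
  by do ![case: ifPn => ?]; try (exfalso; lia); ring.
rewrite sumrB !sum_nat_indicator Hj.
by have -> : (1 <= j.-1 <= n)%N = (1 < j)%N by apply/idP/idP; lia.
Qed.

Lemma coroot_comb_partial_sums n (v : vec) j : (1 <= j <= n)%N ->
  coroot_comb n (fun i => \sum_(1 <= k < i.+1) v k) j = v j.
Proof.
move=> Hj; rewrite coroot_combE // big_nat_recr /=; last by lia.
case: ltnP => Hj1.
- by rewrite prednK; [rewrite addrAC subrr add0r | lia].
- have -> : j = 1%N by lia.
  by rewrite big_geq // add0r subr0.
Qed.

Definition root_pairing (n i : nat) (v : vec) : int :=
  if (i < n)%N then v i - v i.+1 else v n *+ 2.

Lemma act_s_reflection n i v : (i <= n)%N ->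
  act_s n i v = fun j => v j - root_pairing n i v * coroot n i j.
Proof.
move=> Hi; apply: functional_extensionality => j.
rewrite /act_s /root_pairing /coroot !epsE.
case: ltnP => [_|Hni].
- have [->|_] := eqVneq j i; first by rewrite ltn_eqF //; ring.
  by case: (eqVneq j i.+1) => [->|_]; ring.
- have -> : i = n by lia.
  by rewrite eqxx; case: eqVneq => [->|_]; ring.
Qed.

Lemma coord_sum_act_s n i v : (1 <= i <= n)%N ->
  coord_sum n (act_s n i v) = coord_sum n v - (if i == n then v n *+ 2 else 0).
Proof.
move=> Hi; rewrite act_s_reflection; last by lia.
rewrite /coord_sum sumrB -mulr_sumr -/(coord_sum n (coroot n i)) coord_sum_coroot //.
rewrite /root_pairing; case: eqP => [->|_]; last by rewrite mulr0.
by rewrite ltnn mulr1.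
Qed.

Lemma coord_sum_act_word_lt n w v : all (fun i => 1 <= i < n)%N w ->
  coord_sum n (act_word n w v) = coord_sum n v.
Proof.
elim: w => [|i w IH] //= /andP[Hi Hw].
by rewrite coord_sum_act_s ?ifF ?subr0 ?IH //; lia.
Qed.

Lemma act_word_cat n u w v : act_word n (u ++ w) v = act_word n u (act_word n w v).
Proof. by rewrite /act_word foldr_cat. Qed.

Lemma act_word_iota n m k v : (m + k <= n)%N ->
  act_word n (iota m k) v = fun j =>
    if j == m then v (m + k)%N else if (m < j <= m + k)%N then v j.-1 else v j.
Proof.
elim: k m => [|k IH] m Hmk /=.
  apply: functional_extensionality => j; rewrite addn0.
  by case: eqP => [->|_] //; case: ifP => //; lia.
rewrite IH; last by lia.
apply: functional_extensionality => j; rewrite /act_s ifT; last by lia.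
by do ![case: ifPn => ?]; try (by congr (v _); lia); try (exfalso; lia).
Qed.

Lemma act_word_rev_iota n m k v : (m + k <= n)%N ->
  act_word n (rev (iota m k)) v = fun j =>
    if (m <= j < m + k)%N then v j.+1 else if j == (m + k)%N then v m else v j.
Proof.
elim: k => [|k IH] Hmk.
  apply: functional_extensionality => j; rewrite addn0 /=.
  by case: ifP; [lia | case: eqP => [->|]].
rewrite -[k.+1]addn1 iotaD rev_cat /= IH; last by lia.
apply: functional_extensionality => j; rewrite /act_s ifT; last by lia.
by do ![case: ifPn => ?]; try (by congr (v _); lia); try (exfalso; lia).
Qed.

Lemma s_theta_wordE n : (1 <= n)%N ->
  s_theta_word n = iota 1 n.-1 ++ n :: rev (iota 1 n.-1).
Proof. by case: n => // n _; rewrite /s_theta_word succnK -[n.+1]addn1 iotaD -catA addn1. Qed.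

Lemma rev_s_theta_word n : (1 <= n)%N -> rev (s_theta_word n) = s_theta_word n.
Proof. by move=> Hn; rewrite s_theta_wordE // rev_cat rev_cons revK -cats1 -catA. Qed.

Lemma act_s_theta_word n v : (1 <= n)%N ->
  act_word n (s_theta_word n) v = fun j => if j == 1%N then - v 1%N else v j.
Proof.
move=> Hn; rewrite s_theta_wordE // act_word_cat /= act_word_rev_iota; last by lia.
rewrite act_word_iota; last by lia.
apply: functional_extensionality => j; rewrite /act_s ltnn eqxx.
by do ![case: ifPn => ?]; try (by congr (v _); lia); try (by congr (- v _); lia);
  try (exfalso; lia).
Qed.

Lemma coord_sum_s_theta_word n v : (1 <= n)%N ->
  coord_sum n (act_word n (s_theta_word n) v) = coord_sum n v - v 1%N *+ 2.
Proof.
move=> Hn; rewrite s_theta_wordE // act_word_cat /= coord_sum_act_word_lt; last first.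
  by apply/allP => i; rewrite mem_iota; lia.
rewrite coord_sum_act_s ?eqxx; last by lia.
rewrite coord_sum_act_word_lt; last by rewrite all_rev; apply/allP => i; rewrite mem_iota; lia.
rewrite act_word_rev_iota; last by lia.
by rewrite ifF ?ifT //; lia.
Qed.

Lemma act_sD n i (x y : vec) :
  act_s n i (fun j => x j + y j) = fun j => act_s n i x j + act_s n i y j.
Proof.
apply: functional_extensionality => j; rewrite /act_s.
by repeat case: ifP => _ //; rewrite opprD.
Qed.

Lemma act_sN n i (x : vec) : act_s n i (fun j => - x j) = fun j => - act_s n i x j.
Proof. by apply: functional_extensionality => j; rewrite /act_s; repeat case: ifP. Qed.

Lemma act_s0 n i : act_s n i (fun=> 0) = fun=> 0.
Proof.
apply: functional_extensionality => j; rewrite /act_s.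
by repeat case: ifP => _ //; rewrite oppr0.
Qed.

Lemma act_wordD n w (x y : vec) :
  act_word n w (fun j => x j + y j) = fun j => act_word n w x j + act_word n w y j.
Proof. by elim: w => [|i w IH] //=; rewrite IH act_sD. Qed.

Lemma act_wordN n w (x : vec) :
  act_word n w (fun j => - x j) = fun j => - act_word n w x j.
Proof. by elim: w => [|i w IH] //=; rewrite IH act_sN. Qed.

Lemma act_word0 n w : act_word n w (fun=> 0) = fun=> 0.
Proof. by elim: w => [|i w IH] //=; rewrite IH act_s0. Qed.

Lemma waf_mulA n a b c :
  waf_mul n a (waf_mul n b c) = waf_mul n (waf_mul n a b) c.
Proof.
rewrite /waf_mul /= catA rev_cat act_word_cat act_wordD.
by congr pair; apply: functional_extensionality => j; rewrite addrA.
Qed.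

Lemma waf_mul1 n a : waf_mul n waf1 a = a.
Proof.
case: a => w x; rewrite /waf_mul /= act_word0.
by congr pair; apply: functional_extensionality => j; rewrite add0r.
Qed.

Lemma eval_word_cat n u w :
  eval_word n (u ++ w) = waf_mul n (eval_word n u) (eval_word n w).
Proof. by elim: u => [|i u IH] /=; rewrite ?waf_mul1 // IH waf_mulA. Qed.

Lemma eval_word_weyl n u : all (fun i => i != 0%N) u -> eval_word n u = (u, fun=> 0).
Proof.
elim: u => [|i u IH] //= /andP[Hi Hu]; rewrite IH // /gen (negbTE Hi) /waf_mul /=.
by rewrite act_word0; congr pair; apply: functional_extensionality => j; rewrite addr0.
Qed.

Definition rho_prefix (n a : nat) : seq nat :=
  if (a <= n)%N then rev (iota 1 a.-1)
  else iota (2 * n - a + 1) (a - n - 1) ++ n :: rev (iota 1 n.-1).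

Definition rho_weyl (n a : nat) : seq nat := rho_prefix n a ++ s_theta_word n.

Lemma rho_wordE n a : (1 <= n)%N -> (1 <= a)%N -> rho_word n a = rho_prefix n a ++ [:: 0%N].
Proof.
move=> Hn Ha; rewrite /rho_word /rho_prefix; case: ifP => _.
  by case: a Ha => // a _; rewrite /= rev_cons cats1.
by case: n Hn => // n _; rewrite /= rev_cons -cats1 -catA.
Qed.

Lemma rho_prefix_weyl n a : (1 <= n)%N -> all (fun i => i != 0%N) (rho_prefix n a).
Proof.
move=> Hn; rewrite /rho_prefix; case: ifP => _.
  by rewrite all_rev; apply/allP => i; rewrite mem_iota; lia.
rewrite all_cat /= all_rev; apply/and3P; split; try (apply/allP => i; rewrite mem_iota); lia.
Qed.

Lemma eval_rho_word n a : (1 <= n)%N -> (1 <= a)%N ->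
  eval_word n (rho_word n a) = (rho_weyl n a, fun j => - eps 1 j).
Proof.
move=> Hn Ha; rewrite rho_wordE // eval_word_cat eval_word_weyl ?rho_prefix_weyl //=.
rewrite /waf_mul /= !cats0 act_word0 /rho_weyl.
by congr pair; apply: functional_extensionality => j; rewrite add0r addr0.
Qed.

Lemma xi_la_nil n : xi_la n [::] = fun=> 0.
Proof. by apply: functional_extensionality => j; rewrite /xi_la oppr0. Qed.

Lemma xi_la_cons n a la : (1 <= n)%N -> (1 <= a)%N ->
  xi_la n (a :: la) = fun j => act_word n (rev (rho_weyl n a)) (xi_la n la) j + eps 1 j.
Proof.
move=> Hn Ha; apply: functional_extensionality => j.
rewrite /xi_la /x_la rev_cons map_rcons flatten_rcons eval_word_cat eval_rho_word //.
by rewrite /waf_mul /= act_wordN opprD opprK.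
Qed.

Lemma act_rho_weyl_small n a v : (1 <= a <= n)%N ->
  act_word n (rev (rho_weyl n a)) v =
  fun j => if j == 1%N then - v a else if (1 < j <= a)%N then v j.-1 else v j.
Proof.
move=> Ha; rewrite /rho_weyl /rho_prefix ifT; last by lia.
rewrite rev_cat rev_s_theta_word ?revK; last by lia.
rewrite act_word_cat act_s_theta_word; last by lia.
rewrite act_word_iota; last by lia.
apply: functional_extensionality => j; rewrite eqxx (_ : (1 + a.-1)%N = a); last by lia.
by case: eqVneq.
Qed.

Lemma coord_sum_act_rho_weyl_large n a v : (n < a <= 2 * n)%N ->
  coord_sum n (act_word n (rev (rho_weyl n a)) v) = coord_sum n v.
Proof.
move=> Ha; have Hn : (1 <= n)%N by lia.
rewrite /rho_weyl /rho_prefix ifF; last by lia.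
rewrite rev_cat rev_s_theta_word // rev_cat rev_cons revK cat_rcons.
rewrite (act_word_cat _ (s_theta_word n)) (act_word_cat _ (iota 1 n.-1)) /=.
set w := act_word n _ v; set u := act_s n n w.
rewrite coord_sum_s_theta_word // coord_sum_act_word_lt; last first.
  by apply/allP => i; rewrite mem_iota; lia.
rewrite act_word_iota; last by lia.
rewrite eqxx (_ : (1 + n.-1)%N = n); last by lia.
rewrite coord_sum_act_s ?eqxx; last by lia.
rewrite /u /act_s ltnn !eqxx mulNrn opprK subrK /w coord_sum_act_word_lt //.
by rewrite all_rev; apply/allP => i; rewrite mem_iota; lia.
Qed.

Definition eps_upto (l : nat) : vec := fun j => if (1 <= j <= l)%N then 1 else 0.

Lemma coord_sum_eps_upto n l : (l <= n)%N -> coord_sum n (eps_upto l) = l%:Z.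
Proof.
move=> Hl; rewrite /coord_sum (big_cat_nat (n := l.+1)) /=; try lia.
rewrite (eq_big_nat _ _ (F2 := fun=> 1)); last by move=> j Hj; rewrite /eps_upto ifT //; lia.
rewrite [X in _ + X](eq_big_nat _ _ (F2 := fun=> 0)); last first.
  by move=> j Hj; rewrite /eps_upto ifF //; lia.
by rewrite !sumr_const_nat mul0rn addr0 subn1 natz.
Qed.

Lemma size_le_head_sorted_gtn (s : seq nat) :
  sorted gtn s -> all (fun a => 0 < a)%N s -> (size s <= head 0 s)%N.
Proof.
elim: s => [|a s IH] //= Hsort /andP[Ha Hpos].
have := IH (path_sorted Hsort) Hpos.
by case: s Hsort {IH Hpos} => [|b s] /=; [lia | move=> /andP[Hab _]; lia].
Qed.

Lemma xi_la_strict n la : sorted gtn la -> all (fun a => 0 < a <= n)%N la ->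
  xi_la n la = eps_upto (size la).
Proof.
elim: la => [|a t IH] Hsort Hall.
  rewrite xi_la_nil; apply: functional_extensionality => j.
  by rewrite /eps_upto /=; case: ifPn => //; lia.
have Hpos : all (fun a => 0 < a)%N (a :: t) by apply: sub_all _ Hall => b /andP[].
have /= Hsize := size_le_head_sorted_gtn Hsort Hpos.
move: Hall => /= /andP[Ha Hall].
rewrite xi_la_cons ?act_rho_weyl_small ?IH ?(path_sorted Hsort) //; try lia.
apply: functional_extensionality => j; rewrite epsE /eps_upto /=.
by do ![case: ifPn => ?]; try (exfalso; lia); rewrite ?oppr0 ?add0r ?addr0.
Qed.

Lemma in_PC_strict n la : in_PC n la -> (head 0 la <= n)%N ->
  sorted gtn la && all (fun a => 0 < a <= n)%N la.
Proof.
rewrite /in_PC; elim: la => [|a t IH] //= /andP[/andP[Ha Hall] Hsort] Han.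
case: t IH Hall Hsort => [|b t] IH /=; first by rewrite andbT; lia.
move=> /andP[Hb Hall] /andP[/andP[_ Hba] Hsort].
rewrite Han /= in Hba.
have /andP[/= -> /= /andP[-> ->]] : sorted gtn (b :: t) && all (fun a => 0 < a <= n)%N (b :: t).
  by apply: IH => /=; [rewrite Hb Hall | lia].
by rewrite Hba !andbT; lia.
Qed.

Lemma coord_sum_xi_la n la : (1 <= n)%N -> in_PC n la ->
  coord_sum n (xi_la n la) = (size la)%:Z.
Proof.
move=> Hn; elim: la => [|a t IH] HPC; first by rewrite xi_la_nil /coord_sum big1.
have [Ha HPCt] : (0 < a <= 2 * n)%N /\ in_PC n t.
  by case/andP: HPC => /andP[Ha Hall] /path_sorted Hsort; split => //; apply/andP.
case: (leqP a n) => Han.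
- have /andP[Hstrict Hbound] := in_PC_strict HPC Han.
  have Hpos : all (fun b => 0 < b)%N (a :: t) by apply: sub_all _ Hbound => b /andP[].
  have /= Hsize := size_le_head_sorted_gtn Hstrict Hpos.
  by rewrite xi_la_strict // coord_sum_eps_upto //=; lia.
- rewrite xi_la_cons; try lia.
  rewrite coord_sumD coord_sum_act_rho_weyl_large ?coord_sum_eps ?IH //; try lia.
  by rewrite ifT //= -addn1 PoszD.
Qed.

Theorem proposition3p3 (n : nat) (la : seq nat) :
  (1 <= n)%N -> in_PC n la ->
  (exists c : nat -> int,
     forall j, (1 <= j <= n)%N -> xi_la n la j = coroot_comb n c j) /\
  (forall c : nat -> int,
     (forall j, (1 <= j <= n)%N -> xi_la n la j = coroot_comb n c j) ->
     c n = (size la)%:Z).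
Proof.
move=> Hn Hla; split.
  exists (fun i => \sum_(1 <= k < i.+1) xi_la n la k) => j Hj.
  by rewrite coroot_comb_partial_sums.
move=> c Hc; rewrite -coord_sum_coroot_comb // -(coord_sum_xi_la Hn Hla).
by apply: eq_big_nat => j Hj; rewrite Hc //; lia.
Qed.
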